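(* Let $M=I\times F$ with the metric $g=-dt^2+f(t)^2g_F$, where $I\subset\mathbb{R}$ is an open interval, $f:I\to(0,\infty)$ is smooth and $(F,g_F)$ is a one-dimensional Riemannian manifold, and let $\overline\nabla$ be the semi-symmetric metric connection determined by $P=\frac{\partial}{\partial t}$. Then $(M,\overline\nabla)$ is Einstein with Einstein constant $\lambda$ if and only if there are constants $c_1,c_2$ such that: (1) if $\lambda<\frac14$: $f(t)=c_1e^{\frac{1+\sqrt{1-4\lambda}}{2}t}+c_2e^{\frac{1-\sqrt{1-4\lambda}}{2}t}$; (2) if $\lambda=\frac14$: $f(t)=c_1e^{\frac12t}+c_2te^{\frac12t}$; (3) if $\lambda>\frac14$: $f(t)=c_1e^{\frac12t}\cos\left(\frac{\sqrt{4\lambda-1}}{2}t\right)+c_2e^{\frac12t}\sin\left(\frac{\sqrt{4\lambda-1}}{2}t\right)$.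
   Context: $\nabla$ is the Levi-Civita connection of $g$, $\pi(X)=g(X,P)$, and $\overline\nabla_XY=\nabla_XY+\pi(Y)X-g(X,Y)P$. Conventions: $\overline R(X,Y)Z=\overline\nabla_X\overline\nabla_YZ-\overline\nabla_Y\overline\nabla_XZ-\overline\nabla_{[X,Y]}Z$, $\overline{\mathrm{Ric}}(X,Y)=\sum_k\varepsilon_kg(\overline R(X,E_k)Y,E_k)$ for a local orthonormal frame $(E_k)$, $\varepsilon_k=g(E_k,E_k)$; Einstein with constant $\lambda$ means $\overline{\mathrm{Ric}}=\lambda g$. *)

From Stdlib Require Import Reals Lra.
From Coquelicot Require Import Coquelicot.
Open Scope R_scope.

(* Everything is computed in the product chart (t, s) of M = I x J, where
   I = (a,b) is the open interval of the statement and J = (c,d) is an open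
   interval parametrizing (a chart of) the 1-dimensional fiber F, on which
   g_F = h(s)^2 ds^2.  Coordinate indices are the naturals 0 (for t) and 1 (for s). *)

Definition in_oint (a b : Rbar) (x : R) : Prop := Rbar_lt a x /\ Rbar_lt x b.

Definition smooth_on (a b : Rbar) (f : R -> R) : Prop :=
  forall (n : nat) (x : R), in_oint a b x -> ex_derive_n f n x.

Definition sum2 (F : nat -> R) : R := F 0%nat + F 1%nat.

Definition delta (i j : nat) : R := if Nat.eqb i j then 1 else 0.

Definition pd (i : nat) (F : R -> R -> R) (t s : R) : R :=
  match i with
  | 0%nat => Derive (fun u => F u s) t
  | _ => Derive (fun u => F t u) s
  end.

Definition metric := nat -> nat -> R -> R -> R.

Definition warped_metric (f h : R -> R) : metric := fun i j t s =>
  match i, j with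
  | 0%nat, 0%nat => -1
  | 1%nat, 1%nat => (f t)^2 * (h s)^2
  | _, _ => 0
  end.

Definition ginv (g : metric) : metric := fun i j t s =>
  let det := g 0%nat 0%nat t s * g 1%nat 1%nat t s - g 0%nat 1%nat t s * g 1%nat 0%nat t s in
  match i, j with
  | 0%nat, 0%nat => g 1%nat 1%nat t s / det
  | 1%nat, 1%nat => g 0%nat 0%nat t s / det
  | 0%nat, 1%nat => - g 0%nat 1%nat t s / det
  | 1%nat, 0%nat => - g 1%nat 0%nat t s / det
  | _, _ => 0
  end.

(* Christoffel symbols of the Levi-Civita connection: nabla_{d_i} d_j = Gamma^k_ij d_k *)
Definition LC_Gamma (g : metric) (k i j : nat) (t s : R) : R :=
  sum2 (fun l => / 2 * ginv g k l t s *
    (pd i (g j l) t s + pd j (g i l) t s - pd l (g i j) t s)).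

(* semi-symmetric metric connection
   bar nabla_X Y = nabla_X Y + pi(Y) X - g(X,Y) P,  pi(X) = g(X,P),
   for a vector field P with components Pc k. *)
Definition ssm_Gamma (g : metric) (Pc : nat -> R -> R -> R) (k i j : nat) (t s : R) : R :=
  LC_Gamma g k i j t s
  + sum2 (fun a => g j a t s * Pc a t s) * delta k i
  - g i j t s * Pc k t s.

Definition P_dt : nat -> R -> R -> R := fun k _ _ => delta k 0.

(* curvature R(d_i,d_j)d_l = Rm^m_{ijl} d_m with the convention
   R(X,Y)Z = nabla_X nabla_Y Z - nabla_Y nabla_X Z - nabla_[X,Y] Z *)
Definition curv (G : nat -> nat -> nat -> R -> R -> R) (m i j l : nat) (t s : R) : R :=
  pd i (G m j l) t s - pd j (G m i l) t s
  + sum2 (fun n => G n j l t s * G m i n t s - G n i l t s * G m j n t s).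

(* Ricci tensor Ric(d_i,d_l) = sum_k eps_k g(R(d_i,E_k)d_l, E_k) for a frame
   E_k = e k a d_a with signs eps k *)
Definition ricci (g : metric) (G : nat -> nat -> nat -> R -> R -> R)
    (e : nat -> nat -> R -> R -> R) (eps : nat -> R) (i l : nat) (t s : R) : R :=
  sum2 (fun k => eps k *
    sum2 (fun a => sum2 (fun b =>
      e k a t s * e k b t s * sum2 (fun m => curv G m i a l t s * g m b t s)))).

(* the natural local orthonormal frame of the warped metric:
   E_0 = d/dt (eps = -1), E_1 = (1/(f h)) d/ds (eps = +1) *)
Definition warped_frame (f h : R -> R) : nat -> nat -> R -> R -> R := fun k a t s =>
  match k, a with
  | 0%nat, 0%nat => 1
  | 1%nat, 1%nat => / (f t * h s)
  | _, _ => 0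
  end.

Definition lorentz_eps (k : nat) : R := if Nat.eqb k 0 then -1 else 1.

Definition ssm_Einstein (a b c d : Rbar) (f h : R -> R) (lam : R) : Prop :=
  let g := warped_metric f h in
  forall t s : R, in_oint a b t -> in_oint c d s ->
  forall i l : nat, (i < 2)%nat -> (l < 2)%nat ->
    ricci g (ssm_Gamma g P_dt) (warped_frame f h) lorentz_eps i l t s = lam * g i l t s.

From Stdlib Require Import Reals Lra Lia.
From Coquelicot Require Import Coquelicot.
Open Scope R_scope.

(* For P = d/dt, the Ricci tensor of the semi-symmetric metric connection of the
   two-dimensional warped product is -((f'' - f') / f) g, so (M, bar nabla) is
   Einstein with constant lam exactly when f'' - f' + lam f = 0 on I.  This
   linear ODE has characteristic polynomial x^2 - x + lam with discriminant
   1 - 4 lam, and the three cases of the theorem are its three kinds of root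
   pairs.  A solution is recovered on I from two first integrals (expressions in
   f and f' with vanishing derivative), which are constant on the interval. *)

Lemma in_oint_locally a b t : in_oint a b t -> locally t (in_oint a b).
Proof. intros H. exact (open_and _ _ (open_Rbar_gt a) (open_Rbar_lt b) t H). Qed.

Lemma in_oint_between a b x y z :
  in_oint a b x -> in_oint a b y -> x <= z <= y -> in_oint a b z.
Proof. unfold in_oint; destruct a, b; simpl; intros; lra. Qed.

Lemma in_oint_inhabited a b : Rbar_lt a b -> exists x, in_oint a b x.
Proof.
  unfold in_oint; destruct a as [x| |], b as [y| |]; simpl; intros H; try contradiction.
  - exists ((x + y) / 2); lra.
  - exists (x + 1); lra.
  - exists (y - 1); lra.
  - exists 0; auto.
Qed.

Lemma is_derive_0_eq_oint a b (phi : R -> R) x y :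
  (forall t, in_oint a b t -> is_derive phi t 0) ->
  in_oint a b x -> in_oint a b y -> phi x = phi y.
Proof.
  intros Hd Hx Hy.
  destruct (Rtotal_order x y) as [Hlt|[<-|Hlt]]; [| reflexivity |].
  - apply eq_is_derive; [|exact Hlt].
    intros t Ht; apply Hd, (in_oint_between a b x y); auto.
  - symmetry; apply eq_is_derive; [|exact Hlt].
    intros t Ht; apply Hd, (in_oint_between a b y x); auto.
Qed.

Lemma smooth_on_ex_derive a b f t : smooth_on a b f -> in_oint a b t -> ex_derive f t.
Proof. intros Hf Ht. exact (Hf 1%nat t Ht). Qed.

Lemma smooth_on_ex_derive_Derive a b f t :
  smooth_on a b f -> in_oint a b t -> ex_derive (Derive f) t.
Proof. intros Hf Ht. exact (Hf 2%nat t Ht). Qed.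

Definition warped_ssm_christoffel (f h : R -> R) (k i j : nat) (t s : R) : R :=
  match k, i, j with
  | 0%nat, 1%nat, 1%nat => f t * Derive f t * h s ^ 2 - f t ^ 2 * h s ^ 2
  | 1%nat, 0%nat, 1%nat => Derive f t / f t
  | 1%nat, 1%nat, 0%nat => Derive f t / f t - 1
  | 1%nat, 1%nat, 1%nat => Derive h s / h s
  | _, _, _ => 0
  end.

Lemma pd0_warped_metric_11 f h t s : ex_derive f t ->
  pd 0 (warped_metric f h 1%nat 1%nat) t s = 2 * f t * Derive f t * h s ^ 2.
Proof.
  intros Hf; unfold pd, warped_metric.
  apply is_derive_unique; auto_derive; [exact Hf|].
  change (fun x => f x) with f; ring.
Qed.

Lemma pd1_warped_metric_11 f h t s : ex_derive h s ->
  pd 1 (warped_metric f h 1%nat 1%nat) t s = 2 * f t ^ 2 * h s * Derive h s.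
Proof.
  intros Hh; unfold pd, warped_metric.
  apply is_derive_unique; auto_derive; [exact Hh|].
  change (fun x => h x) with h; ring.
Qed.

Lemma ssm_Gamma_warped f h t s k i j :
  ex_derive f t -> ex_derive h s -> f t <> 0 -> h s <> 0 ->
  (k < 2)%nat -> (i < 2)%nat -> (j < 2)%nat ->
  ssm_Gamma (warped_metric f h) P_dt k i j t s = warped_ssm_christoffel f h k i j t s.
Proof.
  intros Hf Hh Hf0 Hh0 Hk Hi Hj.
  destruct k as [|[|k]]; try lia; destruct i as [|[|i]]; try lia;
  destruct j as [|[|j]]; try lia;
  unfold ssm_Gamma, LC_Gamma, sum2, ginv, P_dt, delta;
  rewrite ?pd0_warped_metric_11, ?pd1_warped_metric_11 by assumption;
  unfold pd; cbn -[Derive pow]; rewrite ?Derive_const; field; auto.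
Qed.

Section WarpedRicci.

Variables (a b c d : Rbar) (f h : R -> R).
Hypotheses (Hf : smooth_on a b f) (Hf_pos : forall t, in_oint a b t -> 0 < f t)
  (Hh : smooth_on c d h) (Hh_pos : forall s, in_oint c d s -> 0 < h s).

Let g := warped_metric f h.

Lemma ssm_Gamma_warped_on t s k i j : in_oint a b t -> in_oint c d s ->
  (k < 2)%nat -> (i < 2)%nat -> (j < 2)%nat ->
  ssm_Gamma g P_dt k i j t s = warped_ssm_christoffel f h k i j t s.
Proof.
  intros Ht Hs; apply ssm_Gamma_warped.
  - exact (smooth_on_ex_derive a b f t Hf Ht).
  - exact (smooth_on_ex_derive c d h s Hh Hs).
  - exact (Rgt_not_eq _ _ (Hf_pos t Ht)).
  - exact (Rgt_not_eq _ _ (Hh_pos s Hs)).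
Qed.

Lemma pd0_ssm_Gamma_warped t s k i j : in_oint a b t -> in_oint c d s ->
  (k < 2)%nat -> (i < 2)%nat -> (j < 2)%nat ->
  pd 0 (ssm_Gamma g P_dt k i j) t s
  = Derive (fun u => warped_ssm_christoffel f h k i j u s) t.
Proof.
  intros Ht Hs Hk Hi Hj. apply Derive_ext_loc.
  apply (filter_imp (in_oint a b)); [|exact (in_oint_locally a b t Ht)].
  intros u Hu; apply ssm_Gamma_warped_on; auto.
Qed.

Lemma pd1_ssm_Gamma_warped t s k i j : in_oint a b t -> in_oint c d s ->
  (k < 2)%nat -> (i < 2)%nat -> (j < 2)%nat ->
  pd 1 (ssm_Gamma g P_dt k i j) t s
  = Derive (fun v => warped_ssm_christoffel f h k i j t v) s.
Proof.
  intros Ht Hs Hk Hi Hj. apply Derive_ext_loc.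
  apply (filter_imp (in_oint c d)); [|exact (in_oint_locally c d s Hs)].
  intros v Hv; apply ssm_Gamma_warped_on; auto.
Qed.

Lemma Derive_warped_ssm_christoffel_011 t s : in_oint a b t ->
  Derive (fun u => f u * Derive f u * h s ^ 2 - f u ^ 2 * h s ^ 2) t
  = h s ^ 2 * (Derive f t ^ 2 + f t * Derive (Derive f) t - 2 * f t * Derive f t).
Proof.
  intros Ht.
  pose proof (smooth_on_ex_derive a b f t Hf Ht).
  pose proof (smooth_on_ex_derive_Derive a b f t Hf Ht).
  apply is_derive_unique. auto_derive; [auto|].
  change (fun x => f x) with f; change (fun x => Derive f x) with (Derive f); ring.
Qed.

Lemma Derive_warped_ssm_christoffel_110 t : in_oint a b t ->
  Derive (fun u => Derive f u / f u - 1) t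
  = (Derive (Derive f) t * f t - Derive f t ^ 2) / f t ^ 2.
Proof.
  intros Ht.
  pose proof (smooth_on_ex_derive a b f t Hf Ht).
  pose proof (smooth_on_ex_derive_Derive a b f t Hf Ht).
  pose proof (Hf_pos t Ht).
  apply is_derive_unique. auto_derive; [repeat split; auto; lra|].
  change (fun x => f x) with f; change (fun x => Derive f x) with (Derive f).
  field; lra.
Qed.

Lemma ricci_ssm_warped t s i l : in_oint a b t -> in_oint c d s ->
  (i < 2)%nat -> (l < 2)%nat ->
  ricci g (ssm_Gamma g P_dt) (warped_frame f h) lorentz_eps i l t s
  = - ((Derive (Derive f) t - Derive f t) / f t) * g i l t s.
Proof.
  intros Ht Hs Hi Hl.
  pose proof (Hf_pos t Ht); pose proof (Hh_pos s Hs).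
  destruct i as [|[|i]]; try lia; destruct l as [|[|l]]; try lia;
  unfold ricci, curv, sum2;
  rewrite ?pd0_ssm_Gamma_warped, ?pd1_ssm_Gamma_warped by (auto; lia);
  rewrite ?ssm_Gamma_warped_on by (auto; lia);
  unfold g; cbn -[Derive pow];
  rewrite ?Derive_warped_ssm_christoffel_011, ?Derive_warped_ssm_christoffel_110,
    ?Derive_const by auto;
  field; lra.
Qed.

End WarpedRicci.

Definition einstein_ode (lam : R) (f : R -> R) (t : R) : Prop :=
  Derive (Derive f) t = Derive f t - lam * f t.

Lemma ssm_Einstein_iff_einstein_ode a b c d f h lam :
  Rbar_lt c d ->
  smooth_on a b f -> (forall t, in_oint a b t -> 0 < f t) ->
  smooth_on c d h -> (forall s, in_oint c d s -> 0 < h s) ->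
  ssm_Einstein a b c d f h lam <-> forall t, in_oint a b t -> einstein_ode lam f t.
Proof.
  intros Hcd Hf Hf_pos Hh Hh_pos. unfold einstein_ode. split.
  - intros HE t Ht. destruct (in_oint_inhabited c d Hcd) as [s Hs].
    specialize (HE t s Ht Hs 0%nat 0%nat ltac:(lia) ltac:(lia)).
    rewrite (ricci_ssm_warped a b c d f h Hf Hf_pos Hh Hh_pos) in HE by auto.
    pose proof (Hf_pos t Ht). cbn in HE.
    assert (E : Derive (Derive f) t - Derive f t
                = (Derive (Derive f) t - Derive f t) / f t * f t) by (field; lra).
    replace ((Derive (Derive f) t - Derive f t) / f t) with (- lam) in E by lra.
    lra.
  - intros Hode t s Ht Hs i l Hi Hl.
    rewrite (ricci_ssm_warped a b c d f h Hf Hf_pos Hh Hh_pos) by auto.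
    pose proof (Hf_pos t Ht). rewrite (Hode t Ht).
    f_equal. field; lra.
Qed.

Lemma einstein_ode_of_closed_form a b lam f (F F1 F2 : R -> R) :
  (forall u, in_oint a b u -> f u = F u) ->
  (forall u, is_derive F u (F1 u)) -> (forall u, is_derive F1 u (F2 u)) ->
  (forall u, F2 u = F1 u - lam * F u) ->
  forall t, in_oint a b t -> einstein_ode lam f t.
Proof.
  intros HF H1 H2 Hode t Ht.
  assert (HD : forall u, in_oint a b u -> Derive f u = F1 u).
  { intros u Hu. rewrite (Derive_ext_loc f F); [exact (is_derive_unique _ _ _ (H1 u))|].
    exact (filter_imp _ _ HF (in_oint_locally a b u Hu)). }
  unfold einstein_ode.
  rewrite (Derive_ext_loc (Derive f) F1).
  - rewrite (is_derive_unique _ _ _ (H2 t)), HD, HF by exact Ht. apply Hode.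
  - exact (filter_imp _ _ HD (in_oint_locally a b t Ht)).
Qed.

Section FirstIntegrals.

Variables (a b : Rbar) (f : R -> R) (lam : R).
Hypotheses (Hf : smooth_on a b f) (Hode : forall t, in_oint a b t -> einstein_ode lam f t).

(* Differentiates an expression in [f] and [Derive f], then eliminates [f''] by the ODE. *)
Local Ltac derive_along_ode u Hu :=
  pose proof (smooth_on_ex_derive a b f u Hf Hu);
  pose proof (smooth_on_ex_derive_Derive a b f u Hf Hu);
  auto_derive; [repeat split; auto|];
  change (fun x => Derive f x) with (Derive f); change (fun x => f x) with f;
  rewrite (Hode u Hu).

Lemma first_integral_exp r s u : r + s = 1 -> r * s = lam -> in_oint a b u ->
  is_derive (fun v => (Derive f v - r * f v) * exp (- (s * v))) u 0.
Proof.
  intros Hsum Hprod Hu. derive_along_ode u Hu.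
  replace r with (1 - s) in * by lra. rewrite <- Hprod. ring.
Qed.

Lemma first_integral_double_root u : lam = / 4 -> in_oint a b u ->
  is_derive (fun v => f v * exp (- (/ 2 * v))
                      - v * ((Derive f v - / 2 * f v) * exp (- (/ 2 * v)))) u 0.
Proof.
  intros Hlam Hu. derive_along_ode u Hu. rewrite Hlam. field.
Qed.

Lemma first_integral_cos w u : w <> 0 -> w * w = lam - / 4 -> in_oint a b u ->
  is_derive (fun v => exp (- (/ 2 * v))
    * (f v * cos (w * v) - (Derive f v - f v / 2) / w * sin (w * v))) u 0.
Proof.
  intros Hw0 Hw Hu. derive_along_ode u Hu.
  replace lam with (w * w + / 4) by lra. field; auto.
Qed.

Lemma first_integral_sin w u : w <> 0 -> w * w = lam - / 4 -> in_oint a b u ->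
  is_derive (fun v => exp (- (/ 2 * v))
    * (f v * sin (w * v) + (Derive f v - f v / 2) / w * cos (w * v))) u 0.
Proof.
  intros Hw0 Hw Hu. derive_along_ode u Hu.
  replace lam with (w * w + / 4) by lra. field; auto.
Qed.

End FirstIntegrals.

Lemma einstein_ode_on_iff_distinct_roots a b f lam :
  Rbar_lt a b -> smooth_on a b f -> lam < / 4 ->
  (forall t, in_oint a b t -> einstein_ode lam f t) <->
  exists c1 c2 : R, forall t, in_oint a b t ->
    f t = c1 * exp ((1 + sqrt (1 - 4 * lam)) / 2 * t)
        + c2 * exp ((1 - sqrt (1 - 4 * lam)) / 2 * t).
Proof.
  intros Hab Hf Hlam.
  set (q := sqrt (1 - 4 * lam)).
  assert (Hq : q * q = 1 - 4 * lam) by (apply sqrt_sqrt; lra).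
  assert (Hq_pos : 0 < q) by (apply sqrt_lt_R0; lra).
  set (r1 := (1 + q) / 2); set (r2 := (1 - q) / 2).
  assert (Hsum : r1 + r2 = 1) by (unfold r1, r2; lra).
  assert (Hprod : r1 * r2 = lam) by (unfold r1, r2; nra).
  assert (Hr : r1 - r2 <> 0) by (unfold r1, r2; lra).
  clearbody r1 r2. split.
  - intros Hode. destruct (in_oint_inhabited a b Hab) as [t0 Ht0].
    set (phi1 := fun v => (Derive f v - r2 * f v) * exp (- (r1 * v))).
    set (phi2 := fun v => (Derive f v - r1 * f v) * exp (- (r2 * v))).
    assert (Hphi1 : forall u, in_oint a b u -> is_derive phi1 u 0)
      by (intros u Hu; apply (first_integral_exp a b f lam); auto; lra).
    assert (Hphi2 : forall u, in_oint a b u -> is_derive phi2 u 0)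
      by (intros u Hu; apply (first_integral_exp a b f lam); auto; lra).
    exists (phi1 t0 / (r1 - r2)), (phi2 t0 / (r2 - r1)). intros t Ht.
    rewrite <- (is_derive_0_eq_oint a b phi1 t t0 Hphi1),
      <- (is_derive_0_eq_oint a b phi2 t t0 Hphi2) by assumption.
    unfold phi1, phi2; rewrite !exp_Ropp.
    pose proof (exp_pos (r1 * t)); pose proof (exp_pos (r2 * t)).
    field; repeat split; lra.
  - intros (c1 & c2 & Hc).
    apply (einstein_ode_of_closed_form a b lam f
      (fun u => c1 * exp (r1 * u) + c2 * exp (r2 * u))
      (fun u => c1 * r1 * exp (r1 * u) + c2 * r2 * exp (r2 * u))
      (fun u => c1 * r1 ^ 2 * exp (r1 * u) + c2 * r2 ^ 2 * exp (r2 * u))).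
    + exact Hc.
    + intros u; auto_derive; auto; ring.
    + intros u; auto_derive; auto; ring.
    + intros u. rewrite <- Hprod. replace r2 with (1 - r1) by lra. ring.
Qed.

Lemma einstein_ode_on_iff_double_root a b f lam :
  Rbar_lt a b -> smooth_on a b f -> lam = / 4 ->
  (forall t, in_oint a b t -> einstein_ode lam f t) <->
  exists c1 c2 : R, forall t, in_oint a b t ->
    f t = c1 * exp (/ 2 * t) + c2 * t * exp (/ 2 * t).
Proof.
  intros Hab Hf Hlam. split.
  - intros Hode. destruct (in_oint_inhabited a b Hab) as [t0 Ht0].
    set (phi2 := fun v => (Derive f v - / 2 * f v) * exp (- (/ 2 * v))).
    set (phi1 := fun v => f v * exp (- (/ 2 * v)) - v * phi2 v).
    assert (Hphi1 : forall u, in_oint a b u -> is_derive phi1 u 0)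
      by (intros u Hu; exact (first_integral_double_root a b f lam Hf Hode u Hlam Hu)).
    assert (Hphi2 : forall u, in_oint a b u -> is_derive phi2 u 0)
      by (intros u Hu; apply (first_integral_exp a b f lam); auto; lra).
    exists (phi1 t0), (phi2 t0). intros t Ht.
    rewrite <- (is_derive_0_eq_oint a b phi1 t t0 Hphi1),
      <- (is_derive_0_eq_oint a b phi2 t t0 Hphi2) by assumption.
    unfold phi1, phi2; rewrite !exp_Ropp.
    pose proof (exp_pos (/ 2 * t)). field; lra.
  - intros (c1 & c2 & Hc).
    apply (einstein_ode_of_closed_form a b lam f
      (fun u => c1 * exp (/ 2 * u) + c2 * u * exp (/ 2 * u))
      (fun u => exp (/ 2 * u) * (c1 / 2 + c2 * u / 2 + c2))
      (fun u => exp (/ 2 * u) * (c1 / 4 + c2 * u / 4 + c2))).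
    + exact Hc.
    + intros u; auto_derive; auto; field.
    + intros u; auto_derive; auto; field.
    + intros u. rewrite Hlam. field.
Qed.

Lemma einstein_ode_on_iff_complex_roots a b f lam :
  Rbar_lt a b -> smooth_on a b f -> / 4 < lam ->
  (forall t, in_oint a b t -> einstein_ode lam f t) <->
  exists c1 c2 : R, forall t, in_oint a b t ->
    f t = c1 * exp (/ 2 * t) * cos (sqrt (4 * lam - 1) / 2 * t)
        + c2 * exp (/ 2 * t) * sin (sqrt (4 * lam - 1) / 2 * t).
Proof.
  intros Hab Hf Hlam.
  set (w := sqrt (4 * lam - 1) / 2).
  assert (Hq : sqrt (4 * lam - 1) * sqrt (4 * lam - 1) = 4 * lam - 1)
    by (apply sqrt_sqrt; lra).
  assert (Hq_pos : 0 < sqrt (4 * lam - 1)) by (apply sqrt_lt_R0; lra).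
  assert (Hw : w * w = lam - / 4) by (unfold w; nra).
  assert (Hw0 : w <> 0) by (unfold w; lra).
  clearbody w. split.
  - intros Hode. destruct (in_oint_inhabited a b Hab) as [t0 Ht0].
    set (psi1 := fun v => exp (- (/ 2 * v))
      * (f v * cos (w * v) - (Derive f v - f v / 2) / w * sin (w * v))).
    set (psi2 := fun v => exp (- (/ 2 * v))
      * (f v * sin (w * v) + (Derive f v - f v / 2) / w * cos (w * v))).
    assert (Hpsi1 : forall u, in_oint a b u -> is_derive psi1 u 0)
      by (intros u Hu; exact (first_integral_cos a b f lam Hf Hode w u Hw0 Hw Hu)).
    assert (Hpsi2 : forall u, in_oint a b u -> is_derive psi2 u 0)
      by (intros u Hu; exact (first_integral_sin a b f lam Hf Hode w u Hw0 Hw Hu)).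
    exists (psi1 t0), (psi2 t0). intros t Ht.
    rewrite <- (is_derive_0_eq_oint a b psi1 t t0 Hpsi1),
      <- (is_derive_0_eq_oint a b psi2 t t0 Hpsi2) by assumption.
    unfold psi1, psi2; rewrite !exp_Ropp.
    pose proof (exp_pos (/ 2 * t)). pose proof (sin2_cos2 (w * t)) as Hpyth.
    unfold Rsqr in Hpyth.
    transitivity (f t * (sin (w * t) * sin (w * t) + cos (w * t) * cos (w * t)));
      [rewrite Hpyth; ring | field; lra].
  - intros (c1 & c2 & Hc).
    apply (einstein_ode_of_closed_form a b lam f
      (fun u => c1 * exp (/ 2 * u) * cos (w * u) + c2 * exp (/ 2 * u) * sin (w * u))
      (fun u => exp (/ 2 * u) * ((c1 * cos (w * u) + c2 * sin (w * u)) / 2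
                 + w * (- c1 * sin (w * u) + c2 * cos (w * u))))
      (fun u => exp (/ 2 * u) * ((/ 4 - w * w) * (c1 * cos (w * u) + c2 * sin (w * u))
                 + w * (- c1 * sin (w * u) + c2 * cos (w * u))))).
    + exact Hc.
    + intros u; auto_derive; auto; field.
    + intros u; auto_derive; auto; field.
    + intros u. replace lam with (w * w + / 4) by lra. field.
Qed.

Theorem theorem4p18 (a b c d : Rbar) (f h : R -> R) (lam : R) :
  Rbar_lt a b -> Rbar_lt c d ->
  smooth_on a b f -> (forall t, in_oint a b t -> 0 < f t) ->
  smooth_on c d h -> (forall s, in_oint c d s -> 0 < h s) ->
  (ssm_Einstein a b c d f h lam <->
    ((lam < / 4 -> exists c1 c2 : R, forall t, in_oint a b t ->
        f t = c1 * exp ((1 + sqrt (1 - 4 * lam)) / 2 * t)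
            + c2 * exp ((1 - sqrt (1 - 4 * lam)) / 2 * t)) /\
     (lam = / 4 -> exists c1 c2 : R, forall t, in_oint a b t ->
        f t = c1 * exp (/ 2 * t) + c2 * t * exp (/ 2 * t)) /\
     (/ 4 < lam -> exists c1 c2 : R, forall t, in_oint a b t ->
        f t = c1 * exp (/ 2 * t) * cos (sqrt (4 * lam - 1) / 2 * t)
            + c2 * exp (/ 2 * t) * sin (sqrt (4 * lam - 1) / 2 * t)))).
Proof.
  intros Hab Hcd Hf Hf_pos Hh Hh_pos.
  rewrite (ssm_Einstein_iff_einstein_ode a b c d f h lam Hcd Hf Hf_pos Hh Hh_pos).
  destruct (total_order_T lam (/ 4)) as [[Hlam|Hlam]|Hlam].
  - rewrite (einstein_ode_on_iff_distinct_roots a b f lam Hab Hf Hlam).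
    split; [intros Hsol; repeat split; intros; [exact Hsol | lra | lra]|].
    intros (Hsol & _ & _); exact (Hsol Hlam).
  - rewrite (einstein_ode_on_iff_double_root a b f lam Hab Hf Hlam).
    split; [intros Hsol; repeat split; intros; [lra | exact Hsol | lra]|].
    intros (_ & Hsol & _); exact (Hsol Hlam).
  - rewrite (einstein_ode_on_iff_complex_roots a b f lam Hab Hf Hlam).
    split; [intros Hsol; repeat split; intros; [lra | lra | exact Hsol]|].
    intros (_ & _ & Hsol); exact (Hsol Hlam).
Qed.
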